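(* Let $G=(V,E)$ be a graph with edge weights, let $V_{cover}\subseteq V$ be a vertex cover of $G$, and let $G'$ be the subgraph consisting of all edges of $G$ between vertices of $V_{cover}$ together with, for each vertex $u\in V_{cover}$, the $|V_{cover}|+1$ maximum weight edges from $u$ to vertices in $V\setminus V_{cover}$ (all such edges if there are fewer). If $M'$ is a $(1+\epsilon)$-approximate maximum weight matching in $G'$, then it is also a $(1+\epsilon)$-approximate maximum weight matching in $G$.
   Context: A vertex cover is a set of vertices containing at least one endpoint of every edge. For a matching $M$, $w(M)=\sum_{e\in M}w(e)$; $M$ is a $(1+\epsilon)$-approximate maximum weight matching of $H$ if $w(M)\ge\frac{1}{1+\epsilon}$ times the maximum weight of a matching of $H$. *)

From mathcomp Require Import all_boot all_order all_algebra.
Set Implicit Arguments. Unset Strict Implicit. Unset Printing Implicit Defensive.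
Import Order.TTheory GRing.Theory Num.Theory.
Local Open Scope ring_scope.

Section Defs.
Variable T : finType.

Definition simple_graph (E : {set {set T}}) : Prop :=
  forall e, e \in E -> #|e| = 2%N.

Definition vertex_cover (E : {set {set T}}) (C : {set T}) : Prop :=
  forall e, e \in E -> e :&: C != set0.

Definition matching (E : {set {set T}}) (M : {set {set T}}) : Prop :=
  M \subset E /\
  forall e1 e2, e1 \in M -> e2 \in M -> e1 != e2 -> [disjoint e1 & e2].

Definition mweight (R : numDomainType) (w : {set T} -> R) (M : {set {set T}}) : R :=
  \sum_(e in M) w e.

Definition approx_mwm (R : realFieldType) (E : {set {set T}}) (w : {set T} -> R)
  (eps : R) (M : {set {set T}}) : Prop :=
  matching E M /\
  forall M', matching E M' -> (1 + eps)^-1 * mweight w M' <= mweight w M.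

Definition out_edges (E : {set {set T}}) (C : {set T}) (u : T) : {set {set T}} :=
  [set e in E | (u \in e) && [disjoint (e :\ u) & C]].

(* S is a choice of the k maximum-weight edges among the edges in F
   (all of them if there are fewer than k); ties broken arbitrarily. *)
Definition top_edges (R : realDomainType) (w : {set T} -> R) (k : nat)
  (F S : {set {set T}}) : Prop :=
  [/\ S \subset F, #|S| = minn k #|F| &
      forall e f, e \in S -> f \in F :\: S -> w f <= w e].

Definition sparsified (E : {set {set T}}) (C : {set T})
  (S : T -> {set {set T}}) : {set {set T}} :=
  [set e in E | e \subset C] :|: \bigcup_(u in C) S u.

End Defs.

(* Any matching of G can be pushed into G' without losing weight.  An edge
   e = {u, v} of the matching outside G' has u in the cover and v outside it,
   and was not among the |C| + 1 heaviest such edges at u; so every chosen edge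
   at u weighs at least w e.  The chosen edges at u are {u, y} with distinct
   y outside C, while every other matching edge contains a cover vertex and
   hence at most one vertex outside C: it blocks at most one chosen edge.  As a
   matching has at most |C| edges, some chosen edge at u is free and replaces e. *)

From mathcomp Require Import all_boot all_order all_algebra.
Set Implicit Arguments.
Unset Strict Implicit.
Unset Printing Implicit Defensive.
Import Order.TTheory GRing.Theory Num.Theory.
Local Open Scope ring_scope.

Lemma set2_of_card2 (T : finType) (e : {set T}) u y :
  #|e| = 2%N -> u \in e -> y \in e -> y != u -> e = [set u; y].
Proof.
move=> card_e ue ye yu; apply/esym/eqP.
rewrite eqEcard cards2 eq_sym yu card_e andbT.
by apply/subsetP => x; rewrite !inE => /orP[]/eqP->.
Qed.

Lemma exchange_setD_proper (T : finType) (A G : {set T}) e f :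
  f \in G -> e \in A :\: G -> (f |: (A :\ e)) :\: G \proper A :\: G.
Proof.
move=> fG /setDP[eA eG]; rewrite properE; apply/andP; split.
  apply/subsetP => x /setDP[/setU1P[->|/setD1P[_ xA]] xG].
    by rewrite fG in xG.
  by rewrite inE xA xG.
apply/subsetPn; exists e; first by rewrite inE eA eG.
rewrite in_setD in_setU1 in_setD1 eqxx /= orbF.
by apply/negP => /andP[_ /eqP ef]; rewrite ef fG in eG.
Qed.

Section Matchings.
Variables (T : finType) (E : {set {set T}}).

Lemma matching_subset (M N : {set {set T}}) : matching E M -> N \subset M -> matching E N.
Proof.
move=> [ME disjM] /subsetP NM; split; last by move=> e1 e2 /NM + /NM; apply: disjM.
by apply/subsetP => e /NM; apply/subsetP.
Qed.

Lemma matching_widen (E' M : {set {set T}}) : E \subset E' -> matching E M -> matching E' M.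
Proof. by move=> EE' [ME disjM]; split=> //; apply: subset_trans EE'. Qed.

Lemma matching_setU1 (M : {set {set T}}) (f : {set T}) : matching E M -> f \in E ->
  (forall g, g \in M -> [disjoint f & g]) -> matching E (f |: M).
Proof.
move=> [ME disjM] fE disj_f; split.
  by apply/subsetP => g /setU1P[->|/(subsetP ME)].
move=> g1 g2 /setU1P[->|g1M] /setU1P[->|g2M].
- by rewrite eqxx.
- by move=> _; apply: disj_f.
- by move=> _; rewrite disjoint_sym; apply: disj_f.
- exact: disjM.
Qed.

Lemma card_matching_le_cover (C : {set T}) (M : {set {set T}}) :
  vertex_cover E C -> matching E M -> (#|M| <= #|C|)%N.
Proof.
move=> coverC [/subsetP ME disjM].
pose k g := [pick x in g :&: C].
have kP g : g \in M -> exists2 x, k g = Some x & x \in g :&: C.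
  rewrite /k; case: pickP => [x gCx|none]; first by exists x.
  by move=> /ME/coverC/set0Pn[x]; rewrite none.
have k_inj : {in M &, injective k}.
  move=> g1 g2 g1M g2M eq_k; case: (eqVneq g1 g2) => // /(disjM _ _ g1M g2M).
  have [x kx /setIP[xg1 _]] := kP _ g1M.
  have [y ky /setIP[yg2 _]] := kP _ g2M.
  by move: eq_k yg2; rewrite kx ky => -[<-] xg2 /disjointFr /(_ xg1); rewrite xg2.
rewrite -(card_in_imset k_inj) -(card_imset C (@Some_inj _)).
apply: subset_leq_card; apply/subsetP => _ /imsetP[g gM ->].
by have [x -> /setIP[_ xC]] := kP _ gM; rewrite imset_f.
Qed.

End Matchings.

Lemma approx_mwm_lift (R : realFieldType) (T : finType) (E E' : {set {set T}})
    (w : {set T} -> R) eps M :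
  E' \subset E -> 0 <= eps ->
  (forall N, matching E N -> exists2 N', matching E' N' & mweight w N <= mweight w N') ->
  approx_mwm E' w eps M -> approx_mwm E w eps M.
Proof.
move=> E'E eps_ge0 lift [matchM optM]; split; first exact: matching_widen matchM.
move=> N /lift[N' matchN' le_w]; apply: le_trans (optM _ matchN').
by rewrite ler_wpM2l // invr_ge0 addr_ge0.
Qed.

Section Sparsification.
Variables (R : realFieldType) (T : finType) (E : {set {set T}})
  (w : {set T} -> R) (C : {set T}) (S : T -> {set {set T}}).
Hypothesis simpleE : simple_graph E.
Hypothesis coverC : vertex_cover E C.
Hypothesis topS : forall u, u \in C -> top_edges w #|C|.+1 (out_edges E C u) (S u).

Local Notation G' := (sparsified E C S).

Lemma sparsified_sub : G' \subset E.
Proof.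
apply/subsetP => e /setUP[|/bigcupP[u uC]]; first by rewrite inE => /andP[].
by have [/subsetP SF _ _] := topS uC => /SF; rewrite inE => /andP[].
Qed.

Lemma out_edgeP u f :
  f \in out_edges E C u -> exists2 y, y \notin C & f = [set u; y].
Proof.
rewrite inE => /andP[fE /andP[uf disjC]].
have /set0Pn[y yf] : f :\ u != set0.
  by rewrite -card_gt0; move: (cardsD1 u f); rewrite uf simpleE // add1n => -[<-].
exists y; first by rewrite (disjointFr disjC yf).
by move: yf => /setD1P[yu yf]; apply: set2_of_card2 => //; apply: simpleE.
Qed.

Lemma edge_outside_cover_uniq g y z : g \in E ->
  y \in g -> z \in g -> y \notin C -> z \notin C -> y = z.
Proof.
move=> gE yg zg yC zC; have /set0Pn[c /setIP[cg cC]] := coverC gE.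
have cy : y != c by apply: contraNneq yC => ->.
move: zg zC; rewrite (set2_of_card2 (simpleE gE) cg yg cy) !inE.
by case/orP=> /eqP-> //; rewrite cC.
Qed.

Lemma out_edges_meeting_edge_eq u g f1 f2 : g \in E -> u \notin g ->
  f1 \in out_edges E C u -> f2 \in out_edges E C u ->
  ~~ [disjoint f1 & g] -> ~~ [disjoint f2 & g] -> f1 = f2.
Proof.
move=> gE ug /out_edgeP[y1 y1C ->] /out_edgeP[y2 y2C ->].
have meet y : ~~ [disjoint [set u; y] & g] -> y \in g.
  rewrite -setI_eq0 => /set0Pn[x /setIP[]]; rewrite !inE.
  by case/orP=> /eqP-> // ug'; rewrite ug' in ug.
by move=> /meet y1g /meet y2g; rewrite (edge_outside_cover_uniq gE y1g y2g).
Qed.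

Lemma card_blocked_out_edges u (F N : {set {set T}}) :
  F \subset out_edges E C u -> N \subset E -> (forall g, g \in N -> u \notin g) ->
  (#|[set f in F | [exists g in N, ~~ [disjoint f & g]]]| <= #|N|)%N.
Proof.
move=> /subsetP FO /subsetP NE uN; set B := [set f in F | _].
pose h (f : {set T}) := odflt set0 [pick g in N | ~~ [disjoint f & g]].
have hP f : f \in B -> [/\ f \in out_edges E C u, h f \in N & ~~ [disjoint f & h f]].
  rewrite inE => /andP[/FO fO /existsP[g /andP[gN fg]]].
  by rewrite /h; case: pickP => [g' /andP[]|/(_ g)]; last by rewrite gN fg.
have h_inj : {in B &, injective h}.
  move=> f1 f2 /hP[f1O gN f1g] /hP[f2O _ f2g] eq_h; rewrite -eq_h in f2g.
  exact: out_edges_meeting_edge_eq (NE _ gN) (uN _ gN) f1O f2O f1g f2g.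
rewrite -(card_in_imset h_inj); apply: subset_leq_card.
by apply/subsetP => _ /imsetP[f /hP[_ hfN _] ->].
Qed.

Lemma exists_free_top_edge u e (M : {set {set T}}) :
  u \in C -> matching E M -> e \in M -> e \in out_edges E C u :\: S u ->
  exists2 f, f \in S u & forall g, g \in M :\ e -> [disjoint f & g].
Proof.
move=> uC matchM eM /setDP[eO eS]; have [SO cardS _] := topS uC.
have full : #|S u| = #|C|.+1.
  have lt_SO : (#|S u| < #|out_edges E C u|)%N.
    by apply: proper_card; rewrite properE SO; apply/subsetPn; exists e.
  rewrite cardS; apply/minn_idPl; rewrite leqNgt; apply: contraTN lt_SO.
  by move=> /ltnW/minn_idPr; rewrite cardS => ->; rewrite ltnn.
have ue : u \in e by move: eO; rewrite inE => /andP[_ /andP[]].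
have u_notin g : g \in M :\ e -> u \notin g.
  move=> /setD1P[ge gM]; have := matchM.2 _ _ gM eM ge.
  by rewrite disjoint_sym => /disjointFr/(_ ue)->.
have matchMe : matching E (M :\ e) by apply: matching_subset matchM (subsetDl _ _).
have := card_blocked_out_edges SO matchMe.1 u_notin.
set B := [set f in S u | _] => cardB.
have /subsetPn[f fS fB] : ~~ (S u \subset B).
  apply: contraTN cardB => /subset_leq_card SB; rewrite -ltnNge.
  by apply: leq_trans SB; rewrite full ltnS; apply: card_matching_le_cover coverC matchMe.
exists f => // g gMe; apply: contraNT fB => fg.
by rewrite inE fS; apply/existsP; exists g; rewrite gMe.
Qed.

Lemma out_edge_of_not_sparsified e : e \in E -> e \notin G' ->
  exists2 u, u \in C & e \in out_edges E C u :\: S u.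
Proof.
move=> eE; rewrite inE negb_or inE eE /= => /andP[/subsetPn[v ve vC] eS].
have /set0Pn[u /setIP[ue uC]] := coverC eE.
have vu : v != u by apply: contraNneq vC => ->.
exists u => //; rewrite inE; apply/andP; split.
  by apply: contra eS => eSu; apply/bigcupP; exists u.
rewrite inE eE ue (set2_of_card2 (simpleE eE) ue ve vu) setU1K ?disjoints1 //.
by rewrite inE eq_sym.
Qed.

Lemma exchange_step (M : {set {set T}}) e : matching E M -> e \in M :\: G' ->
  exists f, [/\ f \in G', w e <= w f, f \notin M :\ e & matching E (f |: (M :\ e))].
Proof.
move=> matchM /setDP[eM eG'].
have [u uC eOS] := out_edge_of_not_sparsified (subsetP matchM.1 _ eM) eG'.
have [f fS free_f] := exists_free_top_edge uC matchM eM eOS.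
have [/subsetP SO _ heavy] := topS uC.
have := SO _ fS; rewrite inE => /andP[fE /andP[uf _]].
exists f; split.
- by apply/setUP; right; apply/bigcupP; exists u.
- exact: heavy.
- by apply/negP => /free_f /disjointFr /(_ uf); rewrite uf.
- apply: matching_setU1 free_f => //.
  exact: matching_subset matchM (subsetDl _ _).
Qed.

Lemma matching_to_sparsified (N : {set {set T}}) : matching E N ->
  exists2 N', matching G' N' & mweight w N <= mweight w N'.
Proof.
have [n] := ubnP #|N :\: G'|; elim: n N => // n IH N outN matchN.
case: (set_0Vmem (N :\: G')) => [/eqP| [e eout]].
  by rewrite setD_eq0 => NG'; exists N => //; split; last exact: matchN.2.
have [f [fG' le_w fNe matchN']] := exchange_step matchN eout.
have [|N' matchN'G' le_w'] := IH (f |: (N :\ e)) _ matchN'.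
  move: outN; rewrite ltnS; apply: leq_trans.
  exact/proper_card/exchange_setD_proper.
exists N' => //; apply: le_trans le_w'.
by rewrite /mweight (big_setD1 e (setDP eout).1) big_setU1 //= lerD2r.
Qed.

End Sparsification.

Theorem lemma15 (R : realFieldType) (T : finType) (E : {set {set T}})
  (w : {set T} -> R) (C : {set T}) (S : T -> {set {set T}}) (eps : R)
  (M : {set {set T}}) :
  simple_graph E ->
  vertex_cover E C ->
  (forall u, u \in C -> top_edges w #|C|.+1 (out_edges E C u) (S u)) ->
  0 < eps ->
  approx_mwm (sparsified E C S) w eps M ->
  approx_mwm E w eps M.
Proof.
move=> simpleE coverC topS eps_gt0.
apply: approx_mwm_lift (sparsified_sub topS) (ltW eps_gt0) _.
exact: matching_to_sparsified.
Qed.
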